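(* Consider $n>1$ agents with states $\boldsymbol{x}_i(t)\in\mathbb{R}^d$ evolving by $\dot{\boldsymbol{x}}(t)=-L(t)\boldsymbol{x}(t)$, where $\boldsymbol{x}=[\boldsymbol{x}_1^\top,\dots,\boldsymbol{x}_n^\top]^\top\in\mathbb{R}^{dn}$ and $L(t)$ is the matrix-valued Laplacian of a matrix-weighted switching network $\mathcal{G}(t)$ satisfying Assumption 2 (described in the context). If the system achieves cluster consensus, namely there exists $\boldsymbol{x}^*\in\mathbb{R}^{dn}$ with $\lim_{t\to\infty}\boldsymbol{x}(t)=\boldsymbol{x}^*$, then $\lim_{t\to\infty}L(t)\boldsymbol{x}^*=\boldsymbol{0}$.
   Context: A matrix-weighted switching network $\mathcal{G}(t)=(\mathcal{V},\mathcal{E}(t),A(t))$ has node set $\mathcal{V}=\{1,\dots,n\}$ and edge set $\mathcal{E}(t)$; each edge $(i,j)\in\mathcal{E}(t)$ carries a symmetric weight $A_{ij}(t)\in\mathbb{R}^{d\times d}$ which is either positive (semi-)definite or negative (semi-)definite, with $A_{ij}(t)=A_{ji}(t)$, $A_{ii}(t)=0_{d\times d}$, and $A_{ij}(t)=0_{d\times d}$ if $(i,j)\notin\mathcal{E}(t)$. For such a weight, $|A_{ij}|=A_{ij}$ if $A_{ij}\succeq 0$ and $|A_{ij}|=-A_{ij}$ if $A_{ij}\preceq 0$; $\mathrm{sgn}(A_{ij})=1$ if $A_{ij}\succeq0$ (nonzero), $-1$ if $A_{ij}\preceq 0$ (nonzero), $0$ if $A_{ij}=0$. The agent dynamics are $\dot{\boldsymbol{x}}_i=-\sum_{j\in\mathcal{N}_i(t)}|A_{ij}(t)|(\boldsymbol{x}_i-\mathrm{sgn}(A_{ij}(t))\boldsymbol{x}_j)$,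 $\mathcal{N}_i(t)=\{j:(i,j)\in\mathcal{E}(t)\}$. With $A(t)=[A_{ij}(t)]\in\mathbb{R}^{dn\times dn}$ (block matrix) and $D(t)=\mathrm{diag}(D_1(t),\dots,D_n(t))$, $D_i(t)=\sum_{j\in\mathcal{N}_i(t)}|A_{ij}(t)|$, the matrix-valued Laplacian is $L(t)=D(t)-A(t)$, and the stacked dynamics read $\dot{\boldsymbol{x}}=-L(t)\boldsymbol{x}$. Assumption 1: there is a sequence $\{t_k\}_{k\in\mathbb{N}}$ with $t_0=0$, $t_k\to\infty$, $t_{k+1}-t_k\ge\alpha$ for some $\alpha>0$ and all $k$, and $\mathcal{G}(t)$ is constant on each $[t_k,t_{k+1})$. Assumption 2: Assumption 1 holds, and $\mathcal{G}(t)$ is always chosen from a finite set $\{\mathcal{G}_1,\dots,\mathcal{G}_M\}$, each $\mathcal{G}_i$ appearing infinitely many times in the sequence. Cluster consensus: there is a partition $\mathcal{V}_1,\dots,\mathcal{V}_l$ of $\mathcal{V}$ such that agents in the same part have the same limit $\lim_{t\to\infty}\boldsymbol{x}_i(t)$ and agents in different parts have different limits. *)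

From HB Require Import structures.
From mathcomp Require Import all_boot all_order all_algebra.
From mathcomp Require Import all_classical all_reals all_analysis.

Set Implicit Arguments.
Unset Strict Implicit.
Unset Printing Implicit Defensive.

Import Order.TTheory GRing.Theory Num.Theory.
Import numFieldNormedType.Exports.
Local Open Scope ring_scope.

(* The state of the n agents is stored as a d x n matrix whose i-th column
   is x_i (this is the stacked vector x in R^{dn}, reshaped). *)

Section Defs.
Variable R : realType.

Definition psdm d (A : 'M[R]_d) : Prop :=
  forall v : 'cV[R]_d, 0 <= (v^T *m A *m v) 0 0.
Definition nsdm d (A : 'M[R]_d) : Prop :=
  forall v : 'cV[R]_d, (v^T *m A *m v) 0 0 <= 0.

Definition absm d (A : 'M[R]_d) : 'M[R]_d :=
  if `[< psdm A >] then A else - A.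

(* a matrix-weighted network: a weight function W with
   W i j symmetric, W i j = W j i, W i i = 0, and each W i j psd or nsd
   (an absent edge carries the zero weight) *)
Definition is_mw_graph n d (W : 'I_n -> 'I_n -> 'M[R]_d) : Prop :=
  forall i j : 'I_n,
    [/\ (W i j)^T = W i j, W i j = W j i, W i i = 0 &
        psdm (W i j) \/ nsdm (W i j)].

Definition degm n d (W : 'I_n -> 'I_n -> 'M[R]_d) (i : 'I_n) : 'M[R]_d :=
  \sum_(j < n) absm (W i j).

Definition lapl n d (W : 'I_n -> 'I_n -> 'M[R]_d) (X : 'M[R]_(d, n))
  : 'M[R]_(d, n) :=
  \matrix_(a < d, i < n)
    ((degm W i *m col i X - \sum_(j < n) (W i j *m col j X)) a 0).

End Defs.

(* Let the mode [m] be active on windows [[t, t + alpha]] arbitrarily far out.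
   On such a window the mean value theorem gives, entrywise,
   [x (t + alpha) - x t = - alpha * (L_m x xi)] for some [xi] in the window.
   As [t] grows the left side tends to [0] and the right side to
   [- alpha * L_m x*], hence [L_m x* = 0].  Every mode recurs (Assumption 2),
   so [L(t) x* = 0] for all [t]. *)

From HB Require Import structures.
From mathcomp Require Import all_boot all_order all_algebra.
From mathcomp Require Import all_classical all_reals all_analysis.
From mathcomp Require Import lra.

Import Order.TTheory GRing.Theory Num.Theory.
Import numFieldNormedType.Exports.
Local Open Scope ring_scope.
Local Open Scope classical_set_scope.

Lemma lapl_entryE {R : realType} {n d : nat} (W : 'I_n -> 'I_n -> 'M[R]_d)
    (X : 'M[R]_(d, n)) a i :
  lapl W X a i =
    \sum_b degm W i a b * X b i - \sum_j \sum_b W i j a b * X b j.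
Proof.
rewrite !mxE summxE; congr (_ - _).
  by apply: eq_bigr => b _; rewrite mxE.
by apply: eq_bigr => j _; rewrite mxE; apply: eq_bigr => b _; rewrite mxE.
Qed.

Lemma lapl_entry_continuous {R : realType} {n d : nat}
    (W : 'I_n -> 'I_n -> 'M[R]_d) a i :
  continuous (fun X : 'M[R]_(d, n) => lapl W X a i).
Proof.
under eq_fun do rewrite lapl_entryE.
have sum_cont (I : finType) (F : I -> 'M[R]_(d, n) -> R) :
    (forall k, continuous (F k)) -> continuous (fun X => \sum_k F k X).
  by move=> F_cont; apply: continuous_big => //; exact: add_continuous.
have coord_scale_cont c b j : continuous (fun X : 'M[R]_(d, n) => c * X b j).
  move=> X; apply: continuousM; first exact: cst_continuous.
  exact: coord_continuous.
have deg_cont :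
    continuous (fun X : 'M[R]_(d, n) => \sum_b degm W i a b * X b i).
  by apply: (sum_cont) => b; exact: (coord_scale_cont).
have adj_cont :
    continuous (fun X : 'M[R]_(d, n) => \sum_j \sum_b W i j a b * X b j).
  by apply: (sum_cont) => j; apply: (sum_cont) => b; exact: (coord_scale_cont).
by move=> X; exact: (cvgB (deg_cont X) (adj_cont X)).
Qed.

Definition has_derive_on_late_windows {R : realType} {V : normedModType R}
    (alpha : R) (f f' : R -> V) : Prop :=
  forall T, exists2 t, T < t & {within `[t, t + alpha], continuous f} /\
    forall s, t < s < t + alpha -> is_derive s 1 f (f' s).

Lemma derive_lim_eq0_on_late_windows {R : realType} (f g : R -> R)
    (l c alpha : R) :
  0 < alpha -> f @ +oo --> l -> g @ +oo --> c ->
  has_derive_on_late_windows alpha f g -> c = 0.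
Proof.
move=> alpha_gt0 f_cvg g_cvg windows.
apply/eqP; rewrite -normr_le0; apply/ler_addgt0Pr => e e_gt0; rewrite add0r.
have [T [_ late]] : \forall t \near +oo,
    `|c - g t| < e / 2 /\ `|l - f t| < alpha * e / 4.
  near=> t; split; near: t.
    by apply: (cvgrPdist_lt _ _).1 g_cvg (e / 2) _; rewrite divr_gt0.
  by apply: (cvgrPdist_lt _ _).1 f_cvg _ _; rewrite divr_gt0 ?mulr_gt0.
have [t Tt [f_cont f_der]] := windows T.
have t_lt : t < t + alpha by rewrite ltrDl.
have g_der s : s \in `]t, t + alpha[%R -> is_derive s 1 f (g s).
  by rewrite in_itv /= => /f_der.
have [xi] := MVT t_lt g_der f_cont.
rewrite in_itv /= => /andP[t_xi xi_lt]; rewrite addrAC subrr add0r => mvt.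
have [c_gxi _] := late xi (lt_trans Tt t_xi).
have [_ f_t] := late t Tt.
have [_ f_ta] := late (t + alpha) (lt_trans Tt t_lt).
have f_step : `|f (t + alpha) - f t| < e / 2 * alpha.
  have := ler_normD (f (t + alpha) - l) (l - f t).
  rewrite addrA subrK (distrC (f (t + alpha)) l); move: f_t f_ta; lra.
have gxi_small : `|g xi| < e / 2.
  by move: f_step; rewrite mvt normrM (gtr0_norm alpha_gt0) ltr_pM2r.
have := ler_normD (c - g xi) (g xi); rewrite subrK; move: c_gxi gxi_small; lra.
Unshelve. all: by end_near.
Qed.

Lemma is_derive_mx_entry {R : realType} {p q : nat}
    (x : R -> 'M[R]_(p, q)) (t : R) (D : 'M[R]_(p, q)) (a : 'I_p) (b : 'I_q) :
  is_derive t 1 x D -> is_derive t 1 (fun s => x s a b) (D a b).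
Proof.
move=> x_der; have x_dvb : derivable x t 1 by case: x_der.
apply: DeriveDef; first exact: (derivable_mxP _ _ _).1 x_dvb a b.
by rewrite -(@derive_val _ _ _ _ _ _ _ x_der) derive_mx // mxE.
Qed.

Lemma lapl_lim_eq0_on_late_windows {R : realType} {n d : nat}
    (W : 'I_n -> 'I_n -> 'M[R]_d) (x : R -> 'M[R]_(d, n)) xstar alpha :
  0 < alpha -> x @ +oo --> xstar ->
  has_derive_on_late_windows alpha x (fun s => - lapl W (x s)) ->
  lapl W xstar = 0.
Proof.
move=> alpha_gt0 x_cvg windows; apply/matrixP => a i; rewrite [RHS]mxE.
apply/eqP; rewrite -oppr_eq0; apply/eqP.
apply: (@derive_lim_eq0_on_late_windows R (fun s => x s a i)
  (fun s => - lapl W (x s) a i) (xstar a i) _ alpha alpha_gt0).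
- exact: (continuous_cvg _ (@coord_continuous _ _ _ a i xstar) x_cvg).
- apply: cvgN.
  exact: (continuous_cvg _ (lapl_entry_continuous W a i xstar) x_cvg).
move=> T; have [t Tt [x_cont x_der]] := windows T; exists t => //; split.
  move=> s.
  exact: (continuous_cvg _ (@coord_continuous _ _ _ a i _) (x_cont s)).
by move=> s /x_der /(is_derive_mx_entry _ _ _ a i); rewrite mxE.
Qed.

Theorem lemma3 (R : realType) (n d M : nat)
  (Gs : 'I_M -> 'I_n -> 'I_n -> 'M[R]_d)  (* the finite set {G_1,...,G_M} *)
  (sw : R -> 'I_M)                        (* G(t) = Gs (sw t) *)
  (tk : nat -> R) (alpha : R)
  (x : R -> 'M[R]_(d, n)) (xstar : 'M[R]_(d, n)) :
  (1 < n)%N ->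
  (forall m, is_mw_graph (Gs m)) ->
  (* Assumption 1 *)
  tk 0%N = 0 -> tk @ \oo --> +oo -> 0 < alpha ->
  (forall k, alpha <= tk k.+1 - tk k) ->
  (forall k t, tk k <= t < tk k.+1 -> sw t = sw (tk k)) ->
  (* Assumption 2: every graph of the finite set appears infinitely often *)
  (forall (m : 'I_M) (k : nat), exists k', (k <= k')%N /\ sw (tk k') = m) ->
  (* x solves  x' = - L(t) x  on [0, +oo) *)
  (forall k, {within `[tk k, tk k.+1], continuous x}) ->
  (forall k t, tk k < t < tk k.+1 ->
     is_derive t 1 x (- lapl (Gs (sw (tk k))) (x t))) ->
  (* cluster consensus: x(t) converges *)
  x @ +oo --> xstar ->
  (fun t => lapl (Gs (sw t)) xstar) @ +oo --> (0 : 'M[R]_(d, n)).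
Proof.
move=> _ _ _ tk_oo alpha_gt0 alpha_le_gap _ recurrent x_cont x_der x_cvg.
have lapl_xstar m : lapl (Gs m) xstar = 0.
  apply: (lapl_lim_eq0_on_late_windows _ _ _ _ alpha_gt0 x_cvg) => T.
  have [N _ late] := (cvgryPgt tk).1 tk_oo T.
  have [k [Nk swk]] := recurrent m N.
  have window_end : tk k + alpha <= tk k.+1.
    by rewrite -lerBrDl; exact: alpha_le_gap.
  have window_sub : `[tk k, tk k + alpha] `<=` `[tk k, tk k.+1].
    move=> s /=; rewrite !in_itv /= => /andP[-> s_le] /=.
    exact: le_trans s_le window_end.
  exists (tk k); first exact: late.
  split; first exact: continuous_subspaceW window_sub (x_cont k).
  move=> s /andP[ks s_lt]; rewrite -swk; apply: x_der; rewrite ks /=.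
  exact: lt_le_trans s_lt window_end.
by under eq_fun do rewrite lapl_xstar; exact: cvg_cst.
Qed.
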